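(* For all complex $x,y$ with $|xy|<1$, $$\sum_{n=0}^{\infty} n!\,R_n(y)\,x^n=e^{y}\int_0^{y}\frac{e^{-t}}{1-xt}\,dt=e^{y}\sum_{n=0}^{\infty}d_n(x)\frac{y^{n+1}}{(n+1)!},$$ where the integral is along the segment from $0$ to $y$.
   Context: For an integer $n\ge 0$ and complex $y$, $R_n(y)=e^y-1-\frac{y}{1!}-\frac{y^2}{2!}-\dots-\frac{y^n}{n!}=e^y-\sum_{k=0}^n\frac{y^k}{k!}$. The derangement polynomials are $d_n(x)=(-1)^n\sum_{k=0}^{n}\binom{n}{k}(-1)^k k!\,x^k=n!\sum_{j=0}^{n}\frac{(-1)^j}{j!}x^{n-j}$, $n\ge 0$. *)

From Stdlib Require Import Reals Arith Factorial.
From Coquelicot Require Import Coquelicot.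
Open Scope C_scope.

Definition cexp (z : C) : C :=
  (RtoC (exp (Re z))) * (cos (Im z), sin (Im z)).

Definition cfact (k : nat) : C := RtoC (INR (Factorial.fact k)).

Definition Rrem (n : nat) (y : C) : C :=
  cexp y - sum_n (fun k => Cpow y k / cfact k) n.

Definition derangement_poly (n : nat) (x : C) : C :=
  cfact n * sum_n (fun j => Cpow (RtoC (-1)) j / cfact j * Cpow x (n - j)) n.

(* integrand of \int_0^y e^{-t}/(1 - x t) dt along the segment t = s*y, s in [0,1] *)
Definition seg_integrand (x y : C) (s : R) : C :=
  y * cexp (- (RtoC s * y)) / (1 - x * (RtoC s * y)).

(** Along the segment, the integral is [J = \int_0^1 y e^{-sy} / (1 - x s y) ds], and
    [|x s y| <= |xy| < 1] on [0, 1]. Expanding [1 / (1 - x s y)] geometrically gives a series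
    that converges uniformly in [s]; its terms integrate to [n! x^n e^{-y} R_n(y)] because
    [\int_0^y t^n e^{-t} dt = n! e^{-y} R_n(y)], which yields the first identity.
    For the second, [d_n(x) / n!] are the Cauchy-product coefficients of
    [e^{-t} / (1 - x t)]: with [c_n = d_n(x) / n!] one has
    [(1 - x t) \sum_{n <= N} c_n t^n = \sum_{k <= N} (-t)^k / k! - x c_N t^{N+1}],
    and [|c_N| |y|^N -> 0] since [c_{N+1} = x c_N + (-1)^{N+1} / (N+1)!]; so this expansion
    also converges uniformly and integrates termwise to [d_n(x) y^{n+1} / (n+1)!]. *)

From Stdlib Require Import Reals Lra Lia Factorial.
From Coquelicot Require Import Coquelicot.
Open Scope C_scope.

Ltac ring_C := cbv beta; match goal with |- ?u = ?v => change (@eq C u v) end; ring.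
Ltac field_C := cbv beta; match goal with |- ?u = ?v => change (@eq C u v) end; field.

Lemma cfact_neq0 n : cfact n <> 0.
Proof. intros H. apply (INR_fact_neq_0 n), RtoC_inj, H. Qed.

Lemma cfact_S n : cfact (S n) = RtoC (INR (S n)) * cfact n.
Proof. unfold cfact. now rewrite fact_simpl, mult_INR, RtoC_mult. Qed.

Lemma Cmod_cfact n : Cmod (cfact n) = INR (fact n).
Proof. unfold cfact. rewrite Cmod_R. apply Rabs_pos_eq, pos_INR. Qed.

Lemma RtoC_INR_S_neq0 n : RtoC (INR (S n)) <> 0.
Proof. intros H. apply RtoC_inj in H. pose proof (pos_INR n). rewrite S_INR in H. lra. Qed.

Lemma cexp_0 : cexp 0 = 1.
Proof. unfold cexp; simpl. rewrite exp_0, cos_0, sin_0. apply injective_projections; simpl; ring. Qed.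

Lemma cexp_plus a b : cexp (a + b) = cexp a * cexp b.
Proof.
unfold cexp; simpl. rewrite exp_plus, cos_plus, sin_plus.
apply injective_projections; simpl; unfold Re, Im; simpl; ring.
Qed.

Lemma cexp_opp_l y : cexp (- y) * cexp y = 1.
Proof. rewrite <- cexp_plus, <- cexp_0. f_equal. ring_C. Qed.

Lemma Cmod_cexp z : Cmod (cexp z) = exp (Re z).
Proof.
unfold cexp. rewrite Cmod_mult, Cmod_R, Rabs_pos_eq by (left; apply exp_pos).
unfold Cmod; simpl. rewrite <- (Rmult_1_r (exp (fst z))) at 2. f_equal.
transitivity (sqrt 1); [f_equal | apply sqrt_1].
pose proof (sin2_cos2 (Im z)) as E. unfold Rsqr in E. unfold Im in *. lra.
Qed.

Lemma exp_le_exp x y : x <= y -> exp x <= exp y.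
Proof.
intros H. destruct (Rle_lt_or_eq_dec _ _ H) as [Hlt | ->]; [left; now apply exp_increasing | lra].
Qed.

Lemma Cmod_cexp_le z : Cmod (cexp z) <= exp (Cmod z).
Proof.
rewrite Cmod_cexp. apply exp_le_exp.
pose proof (re_le_Cmod z). pose proof (Rle_abs (Re z)). lra.
Qed.

Lemma Cmod_ray_le (s : R) z : 0 <= s <= 1 -> Cmod (RtoC s * z) <= Cmod z.
Proof.
intros Hs. rewrite Cmod_mult, Cmod_R, Rabs_pos_eq by lra.
pose proof (Cmod_ge_0 z). nra.
Qed.

Definition is_derive_C (f : R -> C) (s : R) (l : C) : Prop :=
  is_derive (fun t => Re (f t)) s (Re l) /\ is_derive (fun t => Im (f t)) s (Im l).

Definition ex_derive_C (f : R -> C) (s : R) : Prop := exists l, is_derive_C f s l.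

Lemma is_derive_eq {K : AbsRing} {V : NormedModule K} (f : K -> V) s l l' :
  is_derive f s l -> l = l' -> is_derive f s l'.
Proof. now intros H <-. Qed.

Lemma is_derive_C_eq f s l l' : is_derive_C f s l -> l = l' -> is_derive_C f s l'.
Proof. now intros H <-. Qed.

Lemma is_derive_C_ext f g s l :
  (forall t, f t = g t) -> is_derive_C f s l -> is_derive_C g s l.
Proof.
intros E [H1 H2]; split; eapply is_derive_ext; eauto; intros t; simpl; now rewrite E.
Qed.

Lemma is_derive_C_const c s : is_derive_C (fun _ => c) s 0.
Proof. split; simpl; auto_derive; auto; ring. Qed.

Lemma is_derive_C_id s : is_derive_C RtoC s 1.
Proof. split; simpl; auto_derive; auto; ring. Qed.

Ltac simpl_R := unfold scal; simpl; unfold minus, plus, opp, mult, one, zero; simpl; unfold Re, Im; simpl.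

Lemma is_derive_C_plus f g s a b :
  is_derive_C f s a -> is_derive_C g s b -> is_derive_C (fun t => f t + g t) s (a + b).
Proof.
intros [H1 H2] [H3 H4]; split.
- exact (is_derive_plus _ _ _ _ _ H1 H3).
- exact (is_derive_plus _ _ _ _ _ H2 H4).
Qed.

Lemma is_derive_C_mult f g s a b :
  is_derive_C f s a -> is_derive_C g s b ->
  is_derive_C (fun t => f t * g t) s (a * g s + f s * b).
Proof.
intros [H1 H2] [H3 H4].
assert (Hc : forall u v : R_AbsRing, mult u v = mult v u) by apply Rmult_comm.
split.
- refine (is_derive_eq _ _ _ _ (is_derive_minus _ _ _ _ _
    (is_derive_mult _ _ _ _ _ H1 H3 Hc) (is_derive_mult _ _ _ _ _ H2 H4 Hc)) _).
  simpl_R; ring.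
- refine (is_derive_eq _ _ _ _ (is_derive_plus _ _ _ _ _
    (is_derive_mult _ _ _ _ _ H1 H4 Hc) (is_derive_mult _ _ _ _ _ H2 H3 Hc)) _).
  simpl_R; ring.
Qed.

Lemma is_derive_C_cexp f s a :
  is_derive_C f s a -> is_derive_C (fun t => cexp (f t)) s (a * cexp (f s)).
Proof.
intros [H1 H2].
assert (Hc : forall u v : R_AbsRing, mult u v = mult v u) by apply Rmult_comm.
pose proof (is_derive_comp exp _ s _ _ (is_derive_exp _) H1) as He.
pose proof (is_derive_comp cos _ s _ _ (is_derive_cos _) H2) as Hcos.
pose proof (is_derive_comp sin _ s _ _ (is_derive_sin _) H2) as Hsin.
(* [cexp z] is [RtoC (exp (Re z)) * (cos, sin)], whose factor [RtoC _] has imaginary part 0. *)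
split.
- refine (is_derive_eq _ _ _ _ (is_derive_minus _ _ _ _ _
    (is_derive_mult _ _ _ _ _ He Hcos Hc) (is_derive_mult _ _ _ _ _ (is_derive_const 0%R s) Hsin Hc)) _).
  simpl_R; ring.
- refine (is_derive_eq _ _ _ _ (is_derive_plus _ _ _ _ _
    (is_derive_mult _ _ _ _ _ He Hsin Hc) (is_derive_mult _ _ _ _ _ (is_derive_const 0%R s) Hcos Hc)) _).
  simpl_R; ring.
Qed.

Lemma is_derive_C_pow f s a n :
  is_derive_C f s a ->
  is_derive_C (fun t => Cpow (f t) (S n)) s (RtoC (INR (S n)) * Cpow (f s) n * a).
Proof.
intros H; induction n as [|n IH].
- eapply is_derive_C_eq; [eapply is_derive_C_ext; [|exact H]|]; intros; simpl; ring_C.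
- eapply is_derive_C_eq; [exact (is_derive_C_mult _ _ _ _ _ H IH)|].
  rewrite (S_INR (S n)), RtoC_plus. simpl. ring_C.
Qed.

Lemma is_derive_C_ray u s : is_derive_C (fun t => RtoC t * u) s u.
Proof.
eapply is_derive_C_eq; [exact (is_derive_C_mult _ _ _ _ _ (is_derive_C_id s) (is_derive_C_const u s))|].
ring_C.
Qed.

Lemma is_derive_C_opp f s a : is_derive_C f s a -> is_derive_C (fun t => - f t) s (- a).
Proof.
intros Ha. eapply is_derive_C_eq.
- apply (is_derive_C_ext (fun t => -1 * f t)); [intros; ring_C|].
  exact (is_derive_C_mult (fun _ => -1) f s 0 a (is_derive_C_const _ s) Ha).
- ring_C.
Qed.

Lemma is_derive_C_continuous f s l :
  is_derive_C f s l ->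
  continuous (fun t => Re (f t)) s /\ continuous (fun t => Im (f t)) s.
Proof.
intros [H1 H2]; split; apply (ex_derive_continuous (K := R_AbsRing) (V := R_NormedModule)); eexists; eassumption.
Qed.

Lemma is_RInt_derive_C (F f : R -> C) a b :
  (forall s, Rmin a b <= s <= Rmax a b -> is_derive_C F s (f s)) ->
  (forall s, Rmin a b <= s <= Rmax a b -> ex_derive_C f s) ->
  is_RInt f a b (F b - F a).
Proof.
intros HF Hf.
apply is_RInt_ext with (f := fun t => (Re (f t), Im (f t))).
{ intros t _; now destruct (f t). }
replace (F b - F a) with ((Re (F b) - Re (F a))%R, (Im (F b) - Im (F a))%R)
  by now destruct (F b), (F a).
apply is_RInt_fct_extend_pair.
- apply (is_RInt_derive (V := R_CompleteNormedModule) (fun t => Re (F t)) (fun t => Re (f t)));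
    intros s Hs; [exact (proj1 (HF s Hs))|].
  destruct (Hf s Hs) as [l Hl]; exact (proj1 (is_derive_C_continuous _ _ _ Hl)).
- apply (is_RInt_derive (V := R_CompleteNormedModule) (fun t => Im (F t)) (fun t => Im (f t)));
    intros s Hs; [exact (proj2 (HF s Hs))|].
  destruct (Hf s Hs) as [l Hl]; exact (proj2 (is_derive_C_continuous _ _ _ Hl)).
Qed.

Lemma ex_derive_C_const c s : ex_derive_C (fun _ => c) s.
Proof. eexists; apply is_derive_C_const. Qed.

Lemma ex_derive_C_id s : ex_derive_C RtoC s.
Proof. eexists; apply is_derive_C_id. Qed.

Lemma ex_derive_C_mult f g s :
  ex_derive_C f s -> ex_derive_C g s -> ex_derive_C (fun t => f t * g t) s.
Proof. intros [a Ha] [b Hb]; eexists; exact (is_derive_C_mult _ _ _ _ _ Ha Hb). Qed.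

Lemma ex_derive_C_opp f s : ex_derive_C f s -> ex_derive_C (fun t => - f t) s.
Proof. intros [a Ha]; eexists; exact (is_derive_C_opp _ _ _ Ha). Qed.

Lemma ex_derive_C_div f c s : ex_derive_C f s -> ex_derive_C (fun t => f t / c) s.
Proof. intros H. exact (ex_derive_C_mult _ _ s H (ex_derive_C_const (/ c) s)). Qed.

Lemma ex_derive_C_cexp f s : ex_derive_C f s -> ex_derive_C (fun t => cexp (f t)) s.
Proof. intros [a Ha]; eexists; exact (is_derive_C_cexp _ _ _ Ha). Qed.

Lemma ex_derive_C_pow f n s : ex_derive_C f s -> ex_derive_C (fun t => Cpow (f t) n) s.
Proof.
intros [a Ha]; destruct n as [|n].
- exists 0. apply (is_derive_C_ext (fun _ => 1)); [intros; reflexivity | apply is_derive_C_const].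
- eexists; exact (is_derive_C_pow _ _ _ n Ha).
Qed.

Ltac solve_ex_derive_C := repeat match goal with
  | |- ex_derive_C (fun _ => ?c) _ => apply ex_derive_C_const
  | |- ex_derive_C (fun t => RtoC t) _ => apply ex_derive_C_id
  | |- ex_derive_C (fun t => @?f t * @?g t) _ => apply (ex_derive_C_mult f g)
  | |- ex_derive_C (fun t => - @?f t) _ => apply (ex_derive_C_opp f)
  | |- ex_derive_C (fun t => @?f t / ?c) _ => apply (ex_derive_C_div f c)
  | |- ex_derive_C (fun t => cexp (@?f t)) _ => apply (ex_derive_C_cexp f)
  | |- ex_derive_C (fun t => Cpow (@?f t) ?n) _ => apply (ex_derive_C_pow f n)
  end.

Definition exp_partial (n : nat) (w : C) : C := sum_n (fun k => Cpow w k / cfact k) n.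

Lemma exp_partial_S n w : exp_partial (S n) w = exp_partial n w + Cpow w (S n) / cfact (S n).
Proof. unfold exp_partial. now rewrite sum_Sn. Qed.

Lemma exp_partial_O w : exp_partial 0 w = 1.
Proof. unfold exp_partial. rewrite sum_O. simpl. unfold cfact; simpl. field_C. Qed.

Lemma exp_partial_at_0 n : exp_partial n 0 = 1.
Proof.
induction n as [|n IH]; [apply exp_partial_O|].
rewrite exp_partial_S, IH. simpl. unfold Cdiv. ring_C.
Qed.

Lemma is_derive_C_exp_partial w s d n :
  is_derive_C w s d ->
  is_derive_C (fun t => exp_partial n (w t)) s (d * (exp_partial n (w s) - Cpow (w s) n / cfact n)).
Proof.
intros Hw. induction n as [|n IH].
- eapply is_derive_C_eq.
  + apply (is_derive_C_ext (fun _ => 1)); [intros; now rewrite exp_partial_O | apply is_derive_C_const].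
  + rewrite exp_partial_O. unfold cfact; simpl. field_C.
- eapply is_derive_C_eq.
  + apply (is_derive_C_ext (fun t => exp_partial n (w t) + Cpow (w t) (S n) * / cfact (S n))).
    { intros; now rewrite exp_partial_S. }
    apply is_derive_C_plus; [exact IH|].
    exact (is_derive_C_mult _ _ _ _ _ (is_derive_C_pow _ _ _ n Hw) (is_derive_C_const _ s)).
  + rewrite exp_partial_S, cfact_S.
    pose proof (cfact_neq0 n). pose proof (RtoC_INR_S_neq0 n).
    simpl. field_C. auto.
Qed.

Lemma is_RInt_Rrem n u :
  is_RInt (fun s => u * Cpow (RtoC s * u) n / cfact n * cexp (- (RtoC s * u))) 0 1
    (cexp (- u) * Rrem n u).
Proof.
set (G := fun t => - cexp (RtoC t * - u) * exp_partial n (RtoC t * u)).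
replace (cexp (- u) * Rrem n u) with (G 1 - G 0).
2:{ unfold G, Rrem. fold (exp_partial n u).
    replace (RtoC 0 * u) with (RtoC 0) by ring_C. replace (RtoC 0 * - u) with (RtoC 0) by ring_C.
    replace (RtoC 1 * u) with u by ring_C. replace (RtoC 1 * - u) with (- u) by ring_C.
    rewrite exp_partial_at_0, cexp_0. unfold Cminus.
    rewrite Cmult_plus_distr_l, cexp_opp_l. ring_C. }
apply is_RInt_derive_C; intros s _.
- eapply is_derive_C_eq.
  + apply is_derive_C_mult.
    * apply is_derive_C_opp, is_derive_C_cexp, is_derive_C_ray.
    * apply is_derive_C_exp_partial, is_derive_C_ray.
  + cbv beta. replace (RtoC s * - u) with (- (RtoC s * u)) by ring_C.
    pose proof (cfact_neq0 n). field_C. exact H.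
- solve_ex_derive_C.
Qed.

Lemma Cmod_Rrem_le n u : Cmod (Rrem n u) <= Cmod u ^ S n / INR (fact n) * exp (2 * Cmod u).
Proof.
set (a := Cmod u).
assert (Ha : 0 <= a) by apply Cmod_ge_0.
assert (Hfact : 0 < INR (fact n)) by apply INR_fact_lt_0.
assert (Hint : Cmod (cexp (- u) * Rrem n u) <= (1 - 0) * (a ^ S n / INR (fact n) * exp a)).
{ rewrite Cmod_norm. eapply norm_RInt_le_const; [exact Rle_0_1 | | exact (is_RInt_Rrem n u)].
  intros s Hs. rewrite <- Cmod_norm.
  pose proof (Cmod_ray_le s u Hs) as Hsu.
  pose proof (Cmod_cexp_le (- (RtoC s * u))) as He. rewrite Cmod_opp in He.
  unfold Cdiv. rewrite !Cmod_mult, Cmod_pow, Cmod_inv, Cmod_cfact by apply cfact_neq0.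
  fold a. simpl pow. unfold Rdiv.
  assert (Cmod (RtoC s * u) ^ n <= a ^ n) by (apply pow_incr; split; [apply Cmod_ge_0 | exact Hsu]).
  assert (exp (Cmod (RtoC s * u)) <= exp a) by now apply exp_le_exp.
  assert (0 < / INR (fact n)) by now apply Rinv_0_lt_compat.
  pose proof (pow_le _ n (Cmod_ge_0 (RtoC s * u))). pose proof (pow_le _ n Ha).
  pose proof (Cmod_ge_0 (cexp (- (RtoC s * u)))).
  apply Rmult_le_compat; [repeat apply Rmult_le_pos; lra | lra | | lra].
  apply Rmult_le_compat_r; [lra | apply Rmult_le_compat_l; lra]. }
replace (Rrem n u) with (cexp u * (cexp (- u) * Rrem n u))
  by (rewrite Cmult_assoc, (Cmult_comm (cexp u)), cexp_opp_l; ring_C).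
rewrite Cmod_mult.
pose proof (Cmod_cexp_le u) as He. fold a in He.
replace (2 * a)%R with (a + a)%R by ring. rewrite exp_plus.
pose proof (Cmod_ge_0 (cexp (- u) * Rrem n u)). pose proof (exp_pos a).
assert (0 <= a ^ S n / INR (fact n)) by (apply Rdiv_le_0_compat; [apply pow_le|]; lra).
apply Rle_trans with (exp a * (a ^ S n / INR (fact n) * exp a))%R; [|right; ring].
apply Rmult_le_compat; try nra. apply Cmod_ge_0.
Qed.

Section Real_sequences.
Local Open Scope R_scope.

Lemma Un_cv_const c : Un_cv (fun _ => c) c.
Proof. intros eps Heps; exists 0%nat; intros n _; now rewrite R_dist_eq. Qed.

Lemma Un_cv_0_contraction (u v : nat -> R) r :
  0 <= r < 1 -> (forall n, 0 <= u n) ->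
  (forall n, u (S n) <= r * u n + v (S n)) -> Un_cv v 0 -> Un_cv u 0.
Proof.
intros Hr Hu Hrec Hv eps Heps.
assert (He : 0 < eps * (1 - r) / 2) by (apply Rdiv_lt_0_compat; [apply Rmult_lt_0_compat|]; lra).
destruct (Hv _ He) as [N1 HN1].
assert (Hk : forall k, u (N1 + k)%nat <= r ^ k * u N1 + eps / 2).
{ induction k as [|k IH].
  - rewrite Nat.add_0_r. simpl. lra.
  - rewrite Nat.add_succ_r. eapply Rle_trans; [apply Hrec|].
    assert (v (S (N1 + k)) < eps * (1 - r) / 2).
    { specialize (HN1 (S (N1 + k)) ltac:(lia)). unfold R_dist in HN1. rewrite Rminus_0_r in HN1.
      pose proof (Rle_abs (v (S (N1 + k)))). lra. }
    simpl pow. nra. }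
assert (Hr1 : Rabs r < 1) by (rewrite Rabs_pos_eq; lra).
assert (He2 : 0 < eps / 2 / (u N1 + 1)) by (pose proof (Hu N1); apply Rdiv_lt_0_compat; lra).
destruct (pow_lt_1_zero r Hr1 _ He2) as [K HK].
exists (N1 + K)%nat. intros n Hn. unfold R_dist. rewrite Rminus_0_r, Rabs_pos_eq by apply Hu.
replace n with (N1 + (n - N1))%nat by lia.
eapply Rle_lt_trans; [apply Hk|].
specialize (HK (n - N1)%nat ltac:(lia)). rewrite Rabs_pos_eq in HK by (apply pow_le; lra).
pose proof (Hu N1).
assert (r ^ (n - N1) * u N1 < eps / 2).
{ apply Rle_lt_trans with (r ^ (n - N1) * (u N1 + 1))%R.
  - pose proof (pow_le r (n - N1) (proj1 Hr)). nra.
  - apply Rmult_lt_reg_r with (/ (u N1 + 1))%R; [apply Rinv_0_lt_compat; lra|].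
    rewrite Rmult_assoc, Rinv_r, Rmult_1_r by lra. exact HK. }
lra.
Qed.

Lemma Un_cv_pow_0 r : 0 <= r < 1 -> Un_cv (fun n => r ^ n) 0.
Proof.
intros Hr. apply (Un_cv_0_contraction _ (fun _ => 0%R) r Hr).
- intros n; apply pow_le; lra.
- intros n; simpl; lra.
- apply Un_cv_const.
Qed.

End Real_sequences.

Lemma is_RInt_Cmult c (f : R -> C) a b l :
  is_RInt f a b l -> is_RInt (fun t => c * f t) a b (c * l).
Proof.
intros H.
pose proof (is_RInt_fct_extend_fst _ _ _ _ H) as H1.
pose proof (is_RInt_fct_extend_snd _ _ _ _ H) as H2.
apply is_RInt_ext with (f := fun t => (Re (c * f t), Im (c * f t))).
{ intros t _; now destruct (c * f t). }
replace (c * l) with (Re (c * l), Im (c * l)) by now destruct (c * l).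
apply is_RInt_fct_extend_pair; simpl.
- exact (is_RInt_minus (V := R_NormedModule) _ _ _ _ _ _
    (is_RInt_scal _ _ _ (fst c) _ H1) (is_RInt_scal _ _ _ (snd c) _ H2)).
- exact (is_RInt_plus (V := R_NormedModule) _ _ _ _ _ _
    (is_RInt_scal _ _ _ (fst c) _ H2) (is_RInt_scal _ _ _ (snd c) _ H1)).
Qed.

Lemma is_RInt_sum_n (f : nat -> R -> C) (I : nat -> C) a b N :
  (forall n, is_RInt (f n) a b (I n)) ->
  is_RInt (fun s => sum_n (fun n => f n s) N) a b (sum_n I N).
Proof.
intros H. induction N as [|N IH].
- rewrite sum_O. eapply is_RInt_ext; [|apply H]. intros t _; now rewrite sum_O.
- rewrite sum_Sn. eapply is_RInt_ext; [|exact (is_RInt_plus _ _ _ _ _ _ IH (H (S N)))].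
  intros t _. now rewrite sum_Sn.
Qed.

Definition clamp (a b s : R) : R := Rmax a (Rmin b s).

Lemma clamp_id a b s : a <= s <= b -> clamp a b s = s.
Proof. intros H; unfold clamp. rewrite Rmin_right, Rmax_right; lra. Qed.

Lemma clamp_between a b s : a <= b -> a <= clamp a b s <= b.
Proof. intros H; unfold clamp, Rmax, Rmin. repeat destruct Rle_dec; lra. Qed.

Lemma is_RInt_series_uniform (f : nat -> R -> C) (I : nat -> C) (g : R -> C) (B : nat -> R) a b :
  a <= b ->
  (forall n, is_RInt (f n) a b (I n)) ->
  Un_cv B 0 ->
  (forall N s, a <= s <= b -> Cmod (sum_n (fun n => f n s) N - g s) <= B N) ->
  exists J, is_RInt g a b J /\ is_series I J.
Proof.
intros Hab Hf HB Hunif.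
(* [filterlim_RInt] needs uniform convergence on all of [R]: freeze everything outside [[a, b]]. *)
assert (Hclamp : forall h : R -> C, forall t, Rmin a b < t < Rmax a b -> h (clamp a b t) = h t).
{ intros h t Ht. rewrite Rmin_left, Rmax_right in Ht by lra. rewrite clamp_id; [reflexivity | lra]. }
destruct (filterlim_RInt (V := C_R_CompleteNormedModule)
  (fun N t => sum_n (fun n => f n (clamp a b t)) N) a b eventually eventually_filter
  (fun t => g (clamp a b t)) (sum_n I)) as [J [HJ HgJ]].
- intros N. eapply is_RInt_ext; [|exact (is_RInt_sum_n _ _ _ _ N Hf)].
  intros t Ht. symmetry. exact (Hclamp (fun s => sum_n (fun n => f n s) N) t Ht).
- intros P [eps HP]. destruct (HB (eps / 2)%R) as [N0 HN0]; [destruct eps; simpl; lra|].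
  exists N0; intros N HN; apply HP; intros t.
  specialize (HN0 N HN). unfold R_dist in HN0. rewrite Rminus_0_r in HN0.
  pose proof (Hunif N (clamp a b t) (clamp_between a b t Hab)) as Hb.
  set (z := sum_n (fun n => f n (clamp a b t)) N - g (clamp a b t)) in Hb.
  assert (Hz : Rabs (fst z) < eps /\ Rabs (snd z) < eps).
  { pose proof (Rmax_Cmod z). pose proof (Rle_abs (B N)).
    pose proof (Rmax_l (Rabs (fst z)) (Rabs (snd z))). pose proof (Rmax_r (Rabs (fst z)) (Rabs (snd z))).
    destruct eps; simpl in *; lra. }
  exact Hz.
- exists J; split; [|exact HJ].
  eapply is_RInt_ext; [|exact HgJ]. intros t Ht. exact (Hclamp g t Ht).
Qed.

Lemma sum_n_Cmult_l (c : C) (u : nat -> C) N : sum_n (fun n => c * u n) N = c * sum_n u N.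
Proof. exact (sum_n_mult_l c u N). Qed.

Lemma Cgeom_sum (q : C) N : (1 - q) * sum_n (Cpow q) N = 1 - Cpow q (S N).
Proof.
induction N as [|N IH].
- rewrite sum_O. simpl. ring_C.
- rewrite sum_Sn. change plus with Cplus. rewrite Cmult_plus_distr_l, IH. simpl. ring_C.
Qed.

Lemma Cmod_1_minus_ge z : 1 - Cmod z <= Cmod (1 - z).
Proof.
pose proof (Cmod_triangle (1 - z) z) as H.
replace (1 - z + z) with (RtoC 1) in H by ring_C. rewrite Cmod_1 in H. lra.
Qed.

Definition derangement_coef (x : C) (n : nat) : C :=
  sum_n (fun j => Cpow (RtoC (-1)) j / cfact j * Cpow x (n - j)) n.

Lemma derangement_poly_coef n x : derangement_poly n x = cfact n * derangement_coef x n.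
Proof. reflexivity. Qed.

Lemma derangement_coef_O x : derangement_coef x 0 = 1.
Proof. unfold derangement_coef. rewrite sum_O. simpl. unfold cfact; simpl. field_C. Qed.

Lemma derangement_coef_S x n :
  derangement_coef x (S n) = x * derangement_coef x n + Cpow (RtoC (-1)) (S n) / cfact (S n).
Proof.
unfold derangement_coef. rewrite sum_Sn, Nat.sub_diag. change plus with Cplus. f_equal.
- rewrite <- sum_n_Cmult_l. apply sum_n_ext_loc. intros j Hj.
  replace (S n - j)%nat with (S (n - j)) by lia. simpl. ring_C.
- simpl. ring_C.
Qed.

Lemma derangement_coef_partial_sum x t N :
  (1 - x * t) * sum_n (fun n => derangement_coef x n * Cpow t n) N
  = exp_partial N (- t) - x * derangement_coef x N * Cpow t (S N).
Proof.
induction N as [|N IH].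
- rewrite sum_O, derangement_coef_O, exp_partial_O. simpl. ring_C.
- rewrite sum_Sn. change plus with Cplus.
  rewrite Cmult_plus_distr_l, IH, exp_partial_S, derangement_coef_S.
  replace (- t) with (RtoC (-1) * t) by ring_C.
  rewrite Cpow_mult_l, (Cpow_S t (S N)). pose proof (cfact_neq0 (S N)).
  generalize (Cpow (RtoC (-1)) (S N)) (Cpow t (S N)). intros. field_C. auto.
Qed.

Lemma Un_cv_derangement_coef_pow x (a : R) :
  0 <= a -> (Cmod x * a < 1)%R -> Un_cv (fun N => Cmod (derangement_coef x N) * a ^ N)%R 0%R.
Proof.
intros Ha Hxa.
apply (Un_cv_0_contraction _ (fun n => a ^ n / INR (fact n))%R (Cmod x * a)).
- split; [apply Rmult_le_pos; [apply Cmod_ge_0 | exact Ha] | exact Hxa].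
- intros n. apply Rmult_le_pos; [apply Cmod_ge_0 | now apply pow_le].
- intros n. rewrite derangement_coef_S.
  pose proof (Cmod_triangle (x * derangement_coef x n) (Cpow (RtoC (-1)) (S n) / cfact (S n))) as H.
  rewrite Cmod_mult, Cmod_div, Cmod_pow, Cmod_cfact, Cmod_R, Rabs_m1, pow1 in H by apply cfact_neq0.
  pose proof (pow_le a (S n) Ha).
  apply Rle_trans with ((Cmod x * Cmod (derangement_coef x n) + 1 / INR (fact (S n))) * a ^ S n)%R.
  + now apply Rmult_le_compat_r.
  + simpl pow. unfold Rdiv. right; ring.
- apply cv_speed_pow_fact.
Qed.

Section Segment_integral.

Variables x y : C.
Hypothesis Hxy : Cmod (x * y) < 1.

Lemma Cmod_x_ray_le (s : R) : 0 <= s <= 1 -> Cmod (x * (RtoC s * y)) <= Cmod (x * y).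
Proof.
intros Hs. replace (x * (RtoC s * y)) with (RtoC s * (x * y)) by ring_C.
now apply Cmod_ray_le.
Qed.

Lemma Cmod_1_minus_x_ray_ge (s : R) :
  0 <= s <= 1 -> 1 - Cmod (x * y) <= Cmod (1 - x * (RtoC s * y)).
Proof.
intros Hs. pose proof (Cmod_1_minus_ge (x * (RtoC s * y))). pose proof (Cmod_x_ray_le s Hs). lra.
Qed.

Lemma one_minus_x_ray_neq0 (s : R) : 0 <= s <= 1 -> 1 - x * (RtoC s * y) <> 0.
Proof.
intros Hs H. pose proof (Cmod_1_minus_x_ray_ge s Hs) as Hge.
rewrite H, Cmod_0 in Hge. lra.
Qed.

Lemma seg_integrand_geom_error (s : R) N : 0 <= s <= 1 ->
  sum_n (fun n => y * cexp (- (RtoC s * y)) * Cpow (x * (RtoC s * y)) n) N - seg_integrand x y s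
  = - (y * cexp (- (RtoC s * y)) * Cpow (x * (RtoC s * y)) (S N) / (1 - x * (RtoC s * y))).
Proof.
intros Hs. pose proof (one_minus_x_ray_neq0 s Hs) as Hq.
unfold seg_integrand. rewrite sum_n_Cmult_l.
set (q := x * (RtoC s * y)) in *. set (E := y * cexp (- (RtoC s * y))).
replace (sum_n (Cpow q) N) with ((1 - Cpow q (S N)) / (1 - q))
  by (rewrite <- Cgeom_sum; field_C; exact Hq).
generalize (Cpow q (S N)). intros p. field_C. exact Hq.
Qed.

Lemma Cmod_seg_integrand_geom_error_le (s : R) N : 0 <= s <= 1 ->
  Cmod (sum_n (fun n => y * cexp (- (RtoC s * y)) * Cpow (x * (RtoC s * y)) n) N
        - seg_integrand x y s)
  <= Cmod y * exp (Cmod y) / (1 - Cmod (x * y)) * Cmod (x * y) ^ S N.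
Proof.
intros Hs. set (a := Cmod y). set (r := Cmod (x * y)).
assert (Ha : 0 <= a) by apply Cmod_ge_0.
assert (Hr : 0 <= r < 1) by (split; [apply Cmod_ge_0 | exact Hxy]).
rewrite (seg_integrand_geom_error s N Hs), Cmod_opp.
pose proof (one_minus_x_ray_neq0 s Hs) as Hq.
rewrite Cmod_div by exact Hq. rewrite !Cmod_mult, Cmod_pow. fold a.
pose proof (Cmod_1_minus_x_ray_ge s Hs) as Hd. fold r in Hd.
pose proof (Cmod_x_ray_le s Hs) as Hqr. fold r in Hqr.
pose proof (Cmod_cexp_le (- (RtoC s * y))) as He. rewrite Cmod_opp in He.
pose proof (Cmod_ray_le s y Hs) as Hsy. fold a in Hsy.
assert (HE : Cmod (cexp (- (RtoC s * y))) <= exp a) by (eapply Rle_trans; [exact He | now apply exp_le_exp]).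
assert (HQ : Cmod (x * (RtoC s * y)) ^ S N <= r ^ S N) by (apply pow_incr; split; [apply Cmod_ge_0 | exact Hqr]).
pose proof (pow_le _ (S N) (Cmod_ge_0 (x * (RtoC s * y)))).
pose proof (Cmod_ge_0 (cexp (- (RtoC s * y)))).
unfold Rdiv. replace (a * exp a * / (1 - r) * r ^ S N)%R with (a * exp a * r ^ S N * / (1 - r))%R by ring.
apply Rmult_le_compat.
- apply Rmult_le_pos; [apply Rmult_le_pos|]; lra.
- apply Rlt_le, Rinv_0_lt_compat. lra.
- apply Rmult_le_compat; [apply Rmult_le_pos; lra | lra | apply Rmult_le_compat_l; lra | exact HQ].
- apply Rinv_le_contravar; lra.
Qed.

Lemma is_series_Rrem_seg_integral :
  exists J, is_RInt (seg_integrand x y) 0 1 J /\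
    is_series (fun n => cfact n * Rrem n y * Cpow x n) (cexp y * J).
Proof.
set (a := Cmod y). set (r := Cmod (x * y)).
assert (Hr : 0 <= r < 1) by (split; [apply Cmod_ge_0 | exact Hxy]).
destruct (is_RInt_series_uniform
  (fun n s => y * cexp (- (RtoC s * y)) * Cpow (x * (RtoC s * y)) n)
  (fun n => cfact n * Cpow x n * (cexp (- y) * Rrem n y))
  (seg_integrand x y)
  (fun N => a * exp a / (1 - r) * r ^ S N)%R 0 1 Rle_0_1) as [J [HJ HI]].
- intros n. eapply is_RInt_ext; [|exact (is_RInt_Cmult (cfact n * Cpow x n) _ _ _ _ (is_RInt_Rrem n y))].
  intros s _. rewrite Cpow_mult_l. pose proof (cfact_neq0 n).
  generalize (Cpow x n) (Cpow (RtoC s * y) n). intros. field_C. auto.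
- replace 0%R with (a * exp a / (1 - r) * 0)%R by ring.
  apply CV_mult; [apply Un_cv_const|].
  intros eps Heps. destruct (Un_cv_pow_0 r Hr eps Heps) as [N0 HN0].
  exists N0. intros n Hn. apply HN0. lia.
- intros N s Hs. exact (Cmod_seg_integrand_geom_error_le s N Hs).
- exists J. split; [exact HJ|].
  apply (is_series_ext (fun n => cexp y * (cfact n * Cpow x n * (cexp (- y) * Rrem n y)))).
  { intros n. transitivity (cexp (- y) * cexp y * (cfact n * Rrem n y * Cpow x n)); [ring_C|].
    rewrite cexp_opp_l. ring_C. }
  exact (is_series_scal (cexp y) _ _ HI).
Qed.

Lemma is_RInt_derangement_term n :
  is_RInt (fun s => y * (derangement_coef x n * Cpow (RtoC s * y) n)) 0 1
    (derangement_poly n x * (Cpow y (S n) / cfact (S n))).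
Proof.
set (F := fun t : R => derangement_coef x n * Cpow (RtoC t * y) (S n) / RtoC (INR (S n))).
replace (derangement_poly n x * (Cpow y (S n) / cfact (S n))) with (F 1 - F 0).
2:{ unfold F. rewrite derangement_poly_coef, cfact_S.
    replace (RtoC 1 * y) with y by ring_C. replace (RtoC 0 * y) with (RtoC 0) by ring_C.
    rewrite (Cpow_S (RtoC 0)), Cmult_0_l.
    pose proof (cfact_neq0 n). pose proof (RtoC_INR_S_neq0 n).
    generalize (Cpow y (S n)). intros. field_C. auto. }
apply is_RInt_derive_C; intros s _.
- eapply is_derive_C_eq.
  + apply (is_derive_C_ext (fun t => derangement_coef x n / RtoC (INR (S n)) * Cpow (RtoC t * y) (S n))).
    { intros t. unfold F. field_C. apply RtoC_INR_S_neq0. }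
    apply is_derive_C_mult; [apply is_derive_C_const | apply is_derive_C_pow, is_derive_C_ray].
  + pose proof (RtoC_INR_S_neq0 n). cbv beta.
    generalize (Cpow (RtoC s * y) n). intros. field_C. auto.
- solve_ex_derive_C.
Qed.

Lemma seg_integrand_derangement_error (s : R) N : 0 <= s <= 1 ->
  sum_n (fun n => y * (derangement_coef x n * Cpow (RtoC s * y) n)) N - seg_integrand x y s
  = - (y * (Rrem N (- (RtoC s * y)) + x * derangement_coef x N * Cpow (RtoC s * y) (S N))
       / (1 - x * (RtoC s * y))).
Proof.
intros Hs. pose proof (one_minus_x_ray_neq0 s Hs) as Hq.
unfold seg_integrand. rewrite sum_n_Cmult_l.
set (t := RtoC s * y) in *.
replace (sum_n (fun n => derangement_coef x n * Cpow t n) N)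
  with ((exp_partial N (- t) - x * derangement_coef x N * Cpow t (S N)) / (1 - x * t))
  by (rewrite <- derangement_coef_partial_sum; field_C; exact Hq).
unfold Rrem. fold (exp_partial N (- t)).
generalize (exp_partial N (- t)) (Cpow t (S N)). intros. field_C. exact Hq.
Qed.

Lemma Cmod_seg_integrand_derangement_error_le (s : R) N : 0 <= s <= 1 ->
  Cmod (sum_n (fun n => y * (derangement_coef x n * Cpow (RtoC s * y) n)) N - seg_integrand x y s)
  <= Cmod y / (1 - Cmod (x * y)) *
     (Cmod y * exp (2 * Cmod y) * (Cmod y ^ N / INR (fact N))
      + Cmod (x * y) * (Cmod (derangement_coef x N) * Cmod y ^ N)).
Proof.
intros Hs. rewrite (seg_integrand_derangement_error s N Hs), Cmod_opp.
pose proof (one_minus_x_ray_neq0 s Hs) as Hq.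
pose proof (Cmod_1_minus_x_ray_ge s Hs) as Hd.
pose proof (Cmod_ray_le s y Hs) as Ht.
set (t := RtoC s * y) in *. set (a := Cmod y) in *. set (c := Cmod (derangement_coef x N)).
assert (Ha : 0 <= a) by apply Cmod_ge_0.
assert (Hc : 0 <= c) by apply Cmod_ge_0.
assert (Hfact : 0 < INR (fact N)) by apply INR_fact_lt_0.
assert (HtN : Cmod t ^ S N <= a ^ S N) by (apply pow_incr; split; [apply Cmod_ge_0 | exact Ht]).
assert (Hrem : Cmod (Rrem N (- t)) <= a * exp (2 * a) * (a ^ N / INR (fact N))).
{ eapply Rle_trans; [apply Cmod_Rrem_le|]. rewrite Cmod_opp.
  replace (a * exp (2 * a) * (a ^ N / INR (fact N)))%R with (a ^ S N / INR (fact N) * exp (2 * a))%R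
    by (simpl; unfold Rdiv; ring).
  apply Rmult_le_compat.
  - apply Rdiv_le_0_compat; [apply pow_le, Cmod_ge_0 | exact Hfact].
  - apply Rlt_le, exp_pos.
  - unfold Rdiv. apply Rmult_le_compat_r; [apply Rlt_le, Rinv_0_lt_compat, Hfact | exact HtN].
  - apply exp_le_exp. lra. }
assert (Htail : Cmod (x * derangement_coef x N * Cpow t (S N)) <= Cmod (x * y) * (c * a ^ N)).
{ rewrite !Cmod_mult, Cmod_pow. fold c a.
  replace (Cmod x * a * (c * a ^ N))%R with (Cmod x * c * a ^ S N)%R by (simpl; ring).
  apply Rmult_le_compat_l; [apply Rmult_le_pos; [apply Cmod_ge_0 | exact Hc] | exact HtN]. }
pose proof (Cmod_triangle (Rrem N (- t)) (x * derangement_coef x N * Cpow t (S N))) as Hnum.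
rewrite Cmod_div, Cmod_mult by exact Hq. fold a.
assert (Hr : 1 - Cmod (x * y) > 0) by lra.
unfold Rdiv. rewrite (Rmult_assoc a (/ _)), (Rmult_comm (/ _)), <- (Rmult_assoc a).
apply Rmult_le_compat.
- apply Rmult_le_pos; [exact Ha | apply Cmod_ge_0].
- apply Rlt_le, Rinv_0_lt_compat. lra.
- apply Rmult_le_compat_l; [exact Ha | lra].
- apply Rinv_le_contravar; lra.
Qed.

Lemma is_series_derangement_seg_integral :
  exists J, is_RInt (seg_integrand x y) 0 1 J /\
    is_series (fun n => derangement_poly n x * (Cpow y (S n) / cfact (S n))) J.
Proof.
set (a := Cmod y). set (r := Cmod (x * y)).
assert (Ha : 0 <= a) by apply Cmod_ge_0.
assert (Hra : (Cmod x * a < 1)%R) by (unfold a; rewrite <- Cmod_mult; exact Hxy).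
destruct (is_RInt_series_uniform
  (fun n s => y * (derangement_coef x n * Cpow (RtoC s * y) n))
  (fun n => derangement_poly n x * (Cpow y (S n) / cfact (S n)))
  (seg_integrand x y)
  (fun N => a / (1 - r) * (a * exp (2 * a) * (a ^ N / INR (fact N))
                           + r * (Cmod (derangement_coef x N) * a ^ N)))%R 0 1 Rle_0_1)
  as [J [HJ HI]].
- apply is_RInt_derangement_term.
- replace 0%R with (a / (1 - r) * (a * exp (2 * a) * 0 + r * 0))%R by ring.
  apply CV_mult; [apply Un_cv_const|].
  apply CV_plus; apply CV_mult.
  + apply Un_cv_const.
  + apply cv_speed_pow_fact.
  + apply Un_cv_const.
  + now apply Un_cv_derangement_coef_pow.
- intros N s Hs. exact (Cmod_seg_integrand_derangement_error_le s N Hs).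
- now exists J.
Qed.

End Segment_integral.

Theorem mainTheorem12 (x y : C) :
  Cmod (x * y) < 1 ->
  exists J : C,
    is_RInt (seg_integrand x y) 0 1 J /\
    is_series (fun n : nat => cfact n * Rrem n y * Cpow x n) (cexp y * J) /\
    is_series (fun n : nat => derangement_poly n x * (Cpow y (S n) / cfact (S n))) J.
Proof.
intros Hxy.
destruct (is_series_Rrem_seg_integral x y Hxy) as [J [HJ HRrem]].
destruct (is_series_derangement_seg_integral x y Hxy) as [J' [HJ' Hderangement]].
assert (J' = J) as <-.
{ rewrite <- (is_RInt_unique (V := C_R_CompleteNormedModule) _ _ _ _ HJ).
  exact (eq_sym (is_RInt_unique (V := C_R_CompleteNormedModule) _ _ _ _ HJ')). }
now exists J'.
Qed.
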